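(* With respect to the operator norm induced by the entrywise $\ell_1$-norm $\|C\|=\sum_{x,y\in E}|C(x,y)|$ on $\mathsf M_E$, i.e. $|||S|||=\max\{\|S(C)\|:\|C\|=1\}$, we have (i) $|||L|||=1$ and (ii) $|||L-I|||\le 4/N$ (here $I$ denotes the identity operator on $\mathsf M_E$).
   Context: $E$ is a finite set with $N=\#E>8$ elements, listed in a fixed order; $\mathsf M_E$ is the space of complex $N\times N$ matrices indexed by $E\times E$. $|x\rangle$ (resp. $\langle x|$) is the column (resp. row) vector with 1 in coordinate $x$ and 0 elsewhere; $C^*$ denotes transpose. $Q$ is an irreducible stochastic matrix on $E$ with $Q(x,y)=Q(y,x)$ for all $x,y$ and $\mathrm{tr}(Q)=0$. Let $(U,V)$ be a random pair in $E\times E$ with $\mathbb P(U=x,V=y)=\frac1NQ(x,y)$ and $T=I-|U\rangle\langle U|+|U\rangle\langle V|$ ($I$ the identity matrix); the linear operator $L:\mathsf M_E\to\mathsf M_E$ is $L(C)=\mathbb E[T^*CT]$. *)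

(* Complex scalars: an arbitrary numClosedFieldType R
   (the paper's C is an instance). E is identified with 'I_N (fixed order). *)
From HB Require Import structures.
From mathcomp Require Import all_boot all_order all_algebra.
Set Implicit Arguments. Unset Strict Implicit. Unset Printing Implicit Defensive.
Import Order.TTheory GRing.Theory Num.Theory.
Local Open Scope ring_scope.

Section Defs.
Variables (R : numClosedFieldType) (N : nat).

Definition stochastic (Q : 'M[R]_N) : Prop :=
  (forall x y, 0 <= Q x y) /\ (forall x, \sum_y Q x y = 1).

Definition irreducible_mx (Q : 'M[R]_N) : Prop :=
  forall x y : 'I_N, exists k : nat, 0 < (iter k (mulmx Q) 1%:M) x y.

Definition Tmx (x y : 'I_N) : 'M[R]_N := 1%:M - delta_mx x x + delta_mx x y.

(* L(C) = E[T^* C T] with P(U=x,V=y) = Q(x,y)/N, T^* = transpose *)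
Definition Lop (Q : 'M[R]_N) (C : 'M[R]_N) : 'M[R]_N :=
  \sum_(x < N) \sum_(y < N) ((N%:R)^-1 * Q x y) *: ((Tmx x y)^T *m C *m Tmx x y).

Definition norm1 (C : 'M[R]_N) : R := \sum_(x < N) \sum_(y < N) `|C x y|.

Definition is_opnorm (S : 'M[R]_N -> 'M[R]_N) (a : R) : Prop :=
  (forall C, norm1 C = 1 -> norm1 (S C) <= a) /\
  (exists2 C, norm1 C = 1 & norm1 (S C) = a).
End Defs.

(* L and L - I are linear, so their operator norms for the entrywise l1-norm are
   attained at matrix units delta_ij.  Each T is the 0/1 matrix of the map
   i |-> (if i = U then V else i), hence T^* delta_ij T is again a matrix unit, and
   L(delta_ij) is a convex combination of matrix units: its norm is exactly 1.
   In L(delta_ij) - delta_ij only the draws with U in {i, j} contribute; each U has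
   probability 1/N and each term has norm at most 2, which gives 4/N. *)
From HB Require Import structures.
From mathcomp Require Import all_boot all_order all_algebra.
Set Implicit Arguments. Unset Strict Implicit. Unset Printing Implicit Defensive.
Import Order.TTheory GRing.Theory Num.Theory.
Local Open Scope ring_scope.

Section FunctionMatrix.
Variables (R : pzSemiRingType) (m n : nat).

Definition fun_mx (f : 'I_m -> 'I_n) : 'M[R]_(m, n) := \matrix_(i, a) (f i == a)%:R.

Lemma fun_mx_congr_delta (f : 'I_m -> 'I_n) (i j : 'I_m) :
  (fun_mx f)^T *m delta_mx i j *m fun_mx f = delta_mx (f i) (f j).
Proof.
apply/matrixP => a b; rewrite !mxE (bigD1 j) //= big1 => [|l /negbTE lj]; last first.
  by rewrite !mxE big1 ?mul0r // => k _; rewrite !mxE lj andbF mulr0.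
rewrite !mxE (bigD1 i) //= big1 => [|k /negbTE ki]; last by rewrite !mxE ki mulr0.
by rewrite !mxE !eqxx mulr1 !addr0 -natrM mulnb (eq_sym a) (eq_sym b).
Qed.

End FunctionMatrix.
Arguments fun_mx {R m n} f.

Definition remap n (x y i : 'I_n) : 'I_n := if i == x then y else i.

Lemma Tmx_fun_mx (R : numClosedFieldType) n (x y : 'I_n) :
  Tmx R x y = fun_mx (remap x y).
Proof.
apply/matrixP => i a; rewrite /Tmx /remap !mxE.
have [->|_] := eqVneq i x; last by rewrite subr0 addr0.
by rewrite /= (eq_sym x a) subrr add0r eq_sym.
Qed.

Section EntrywiseNorm.
Variables (R : numClosedFieldType) (N : nat).
Implicit Types (A B : 'M[R]_N) (i j k l : 'I_N).

Lemma norm1_ge0 A : 0 <= norm1 A.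
Proof. by apply: sumr_ge0 => i _; apply: sumr_ge0. Qed.

Lemma norm1D A B : norm1 (A + B) <= norm1 A + norm1 B.
Proof.
rewrite /norm1 -big_split; apply: ler_sum => i _.
by rewrite -big_split; apply: ler_sum => j _; rewrite mxE ler_normD.
Qed.

Lemma norm1Z c A : norm1 (c *: A) = `|c| * norm1 A.
Proof.
rewrite /norm1 mulr_sumr; apply: eq_bigr => i _; rewrite mulr_sumr.
by apply: eq_bigr => j _; rewrite mxE normrM.
Qed.

Lemma norm10 : norm1 (0 : 'M[R]_N) = 0.
Proof. by have := norm1Z 0 0; rewrite scale0r normr0 mul0r. Qed.

Lemma norm1_sum (I : Type) (r : seq I) (P : pred I) (F : I -> 'M[R]_N) :
  norm1 (\sum_(k <- r | P k) F k) <= \sum_(k <- r | P k) norm1 (F k).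
Proof.
elim/big_ind2: _ => [|a A b B HA HB|//].
- by rewrite norm10.
- by apply: le_trans (norm1D _ _) (lerD HA HB).
Qed.

Lemma norm1_delta i j : norm1 (delta_mx i j : 'M[R]_N) = 1.
Proof.
rewrite /norm1 pair_big /= (bigD1 (i, j)) //= big1 => [|[a b] /= ab].
  by rewrite mxE !eqxx normr1 addr0.
by rewrite mxE -xpair_eqE (negbTE ab) normr0.
Qed.

Lemma norm1_delta_sub i j k l : norm1 (delta_mx i j - delta_mx k l : 'M[R]_N) <= 2.
Proof.
apply: le_trans (norm1D _ _) _.
by rewrite -scaleN1r norm1Z normrN normr1 mul1r !norm1_delta.
Qed.

Definition mxsum A : R := \sum_i \sum_j A i j.

Lemma mxsumD A B : mxsum (A + B) = mxsum A + mxsum B.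
Proof.
rewrite /mxsum -big_split; apply: eq_bigr => i _.
by rewrite -big_split; apply: eq_bigr => j _; rewrite mxE.
Qed.

Lemma mxsumZ c A : mxsum (c *: A) = c * mxsum A.
Proof.
rewrite /mxsum mulr_sumr; apply: eq_bigr => i _; rewrite mulr_sumr.
by apply: eq_bigr => j _; rewrite mxE.
Qed.

Lemma mxsum_delta i j : mxsum (delta_mx i j) = 1.
Proof.
rewrite /mxsum pair_big /= (bigD1 (i, j)) //= big1 => [|[a b] /= ab].
  by rewrite mxE !eqxx addr0.
by rewrite mxE -xpair_eqE (negbTE ab).
Qed.

Lemma normr_mxsum_le A : `|mxsum A| <= norm1 A.
Proof.
apply: le_trans (ler_norm_sum _ _ _) _.
by apply: ler_sum => i _; apply: ler_norm_sum.
Qed.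

Lemma norm1_convex_delta (I : finType) (w : I -> R) (a b : I -> 'I_N) :
  (forall p, 0 <= w p) -> \sum_p w p = 1 ->
  norm1 (\sum_p w p *: delta_mx (a p) (b p)) = 1.
Proof.
move=> w_ge0 w_sum; apply/le_anti/andP; split.
  rewrite -[X in _ <= X]w_sum; apply: le_trans (norm1_sum _ _ _) _.
  by apply: ler_sum => p _; rewrite norm1Z norm1_delta mulr1 ger0_norm.
have mxsum0 : mxsum 0 = 0 by rewrite -(scale0r 0) mxsumZ mul0r.
have sum1 : mxsum (\sum_p w p *: delta_mx (a p) (b p)) = 1.
  rewrite (big_morph mxsum mxsumD mxsum0) -[RHS]w_sum.
  by apply: eq_bigr => p _; rewrite mxsumZ mxsum_delta mulr1.
by rewrite -[X in X <= _]normr1 -sum1 normr_mxsum_le.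
Qed.

Section LinearOperator.
Variable S : 'M[R]_N -> 'M[R]_N.
Hypotheses (SD : {morph S : A B / A + B}) (SZ : forall c, {morph S : A / c *: A}).

Lemma norm1_le_delta_bound a :
  (forall i j, norm1 (S (delta_mx i j)) <= a) -> forall C, norm1 (S C) <= norm1 C * a.
Proof.
move=> Sa C; have S0 : S 0 = 0 by have := SZ 0 0; rewrite !scale0r.
rewrite {1}(matrix_sum_delta C) (big_morph S SD S0).
apply: le_trans (norm1_sum _ _ _) _; rewrite /norm1 mulr_suml.
apply: ler_sum => i _; rewrite (big_morph S SD S0) mulr_suml.
apply: le_trans (norm1_sum _ _ _) _; apply: ler_sum => j _.
by rewrite SZ norm1Z ler_wpM2l.
Qed.

Lemma is_opnorm_delta a :
  (forall i j, norm1 (S (delta_mx i j)) <= a) ->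
  (exists i j, norm1 (S (delta_mx i j)) = a) -> is_opnorm S a.
Proof.
move=> Sa [i [j Sij]]; split; last by exists (delta_mx i j); rewrite ?norm1_delta.
by move=> C C1; rewrite -[a]mul1r -C1 norm1_le_delta_bound.
Qed.

Lemma is_opnorm_delta_max :
  (0 < N)%N -> exists i j, is_opnorm S (norm1 (S (delta_mx i j))).
Proof.
move=> N_gt0; pose i0 := Ordinal N_gt0.
pose F (p : 'I_N * 'I_N) := norm1 (S (delta_mx p.1 p.2)).
have F_real : {in xpredT, forall p, F p \is Num.real} by move=> p _; exact/ger0_real/norm1_ge0.
have [[i j] _ Fmax] := @real_arg_maxP _ _ (i0, i0) xpredT F isT F_real.
exists i, j; apply: is_opnorm_delta; last by exists i, j.
by move=> k l; apply: (Fmax (k, l)).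
Qed.

End LinearOperator.

End EntrywiseNorm.

Section RandomTransvection.
Variables (R : numClosedFieldType) (N : nat) (Q : 'M[R]_N).
Implicit Types (A B : 'M[R]_N) (i j x y : 'I_N).

Lemma LopD : {morph Lop Q : A B / A + B}.
Proof.
move=> A B; rewrite /Lop -big_split; apply: eq_bigr => x _; rewrite -big_split.
by apply: eq_bigr => y _; rewrite (mulmxDr (Tmx R x y)^T A B) mulmxDl scalerDr.
Qed.

Lemma LopZ c : {morph Lop Q : A / c *: A}.
Proof.
move=> A; rewrite /Lop scaler_sumr; apply: eq_bigr => x _; rewrite scaler_sumr.
by apply: eq_bigr => y _; rewrite -(scalemxAr c (Tmx R x y)^T A) -scalemxAl !scalerA mulrC.
Qed.

Lemma Lop_delta i j : Lop Q (delta_mx i j) =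
  \sum_x \sum_y ((N%:R)^-1 * Q x y) *: delta_mx (remap x y i) (remap x y j).
Proof.
by apply: eq_bigr => x _; apply: eq_bigr => y _; rewrite Tmx_fun_mx fun_mx_congr_delta.
Qed.

Hypotheses (Q_stochastic : stochastic Q) (N_gt0 : (0 < N)%N).

Lemma Lop_weight_ge0 x y : 0 <= (N%:R)^-1 * Q x y.
Proof. by rewrite mulr_ge0 ?invr_ge0 ?ler0n //; case: Q_stochastic. Qed.

Lemma Lop_weight_row x : \sum_y (N%:R)^-1 * Q x y = (N%:R)^-1.
Proof. by rewrite -mulr_sumr; case: Q_stochastic => _ ->; rewrite mulr1. Qed.

Lemma Lop_weight_sum : \sum_x \sum_y (N%:R)^-1 * Q x y = 1.
Proof.
rewrite (eq_bigr _ (fun x _ => Lop_weight_row x)) sumr_const card_ord.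
by rewrite -[_ *+ N]mulr_natr mulVf // pnatr_eq0 -lt0n.
Qed.

Lemma norm1_Lop_delta i j : norm1 (Lop Q (delta_mx i j)) = 1.
Proof.
rewrite Lop_delta pair_big /=; apply: norm1_convex_delta => [p|].
  exact: Lop_weight_ge0.
by rewrite -[RHS]Lop_weight_sum pair_big.
Qed.

Lemma norm1_Lop_sub_delta i j :
  norm1 (Lop Q (delta_mx i j) - delta_mx i j) <= 4 / N%:R.
Proof.
pose w x y := (N%:R)^-1 * Q x y.
pose D x y := delta_mx (remap x y i) (remap x y j) - delta_mx i j : 'M[R]_N.
have -> : Lop Q (delta_mx i j) - delta_mx i j = \sum_x \sum_y w x y *: D x y.
  rewrite /D; under eq_bigr => x _ do rewrite (eq_bigr _ (fun y _ => scalerBr _ _ _)) sumrB -scaler_suml.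
  by rewrite sumrB -scaler_suml Lop_weight_sum scale1r Lop_delta.
have row_bound x : \sum_y w x y * norm1 (D x y) <= 2 / N%:R * ((x == i)%:R + (x == j)%:R).
  have [x_ij | x_nij] := boolP ((x == i) || (x == j)).
    apply: (@le_trans _ _ (2 / N%:R)).
      rewrite [2 / _]mulrC -(Lop_weight_row x) mulr_suml ler_sum // => y _.
      by rewrite ler_wpM2l ?Lop_weight_ge0 ?norm1_delta_sub.
    rewrite ler_peMr ?mulr_ge0 ?invr_ge0 ?ler0n //.
    by case/orP: x_ij => ->; case: (_ == _); rewrite ?lerDl ?lerDr ?ler01 ?lexx.
  rewrite big1 ?mulr_ge0 ?invr_ge0 ?addr_ge0 ?ler0n // => y _.
  move: x_nij; rewrite negb_or /D /remap !(eq_sym _ x) => /andP[/negbTE -> /negbTE ->].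
  by rewrite subrr norm10 mulr0.
have sum_eq_ind k : \sum_(x < N) ((x == k)%:R : R) = 1.
  by rewrite (bigD1 k) //= eqxx big1 ?addr0 // => x /negbTE ->.
apply: le_trans (norm1_sum _ _ _) _.
apply: (@le_trans _ _ (\sum_x 2 / N%:R * ((x == i)%:R + (x == j)%:R))).
  apply: ler_sum => x _; apply: le_trans (norm1_sum _ _ _) (le_trans _ (row_bound x)).
  by apply: ler_sum => y _; rewrite norm1Z ger0_norm ?Lop_weight_ge0.
by rewrite -mulr_sumr big_split /= !sum_eq_ind mulrAC -[1 + 1]/(2%:R) -natrM lexx.
Qed.

End RandomTransvection.

Theorem proposition2p3 (R : numClosedFieldType) (N : nat) (Q : 'M[R]_N) :
  (8 < N)%N ->
  stochastic Q -> irreducible_mx Q -> Q^T = Q -> \tr Q = 0 ->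
  is_opnorm (Lop Q) 1 /\
  exists a : R, is_opnorm (fun C => Lop Q C - C) a /\ a <= 4 / N%:R.
Proof.
move=> N_gt8 Q_stochastic _ _ _; have N_gt0 : (0 < N)%N by apply: leq_trans N_gt8.
have LD := @LopD R N Q; have LZ := @LopZ R N Q.
split.
  apply: is_opnorm_delta => // [i j|]; first by rewrite norm1_Lop_delta.
  by exists (Ordinal N_gt0), (Ordinal N_gt0); rewrite norm1_Lop_delta.
have [i [j opnorm_ij]] : exists i j, is_opnorm (fun C => Lop Q C - C)
    (norm1 (Lop Q (delta_mx i j) - delta_mx i j)).
  apply: is_opnorm_delta_max => // [A B|c A]; first by rewrite LD opprD addrACA.
  by rewrite LZ scalerBr.
by exists (norm1 (Lop Q (delta_mx i j) - delta_mx i j)); rewrite norm1_Lop_sub_delta.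
Qed.
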